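(* Let $G=(V,E)$ be an undirected graph with $n=|V|$, fix an orientation of its edges, and let $P\subseteq\mathbb{R}^E$ be the matching polytope of $G$. Then $P=\operatorname{conv}\{x\in\mathbb{R}^E_{\geq0}: x(\delta(v))\leq1\text{ and }x(\delta^+(v))\in\mathbb{Z}\text{ for every }v\in V\}$. In particular, $P$ admits a MILEF of size $O(n^2)$ with $n$ integer variables.
   Context: For $v\in V$, $\delta(v)$ is the set of edges incident to $v$, and $\delta^+(v)$ (resp. $\delta^-(v)$) the set of edges entering (resp. leaving) $v$ under the fixed orientation. For $F\subseteq E$, $x(F)=\sum_{e\in F}x_e$. The matching polytope is the convex hull of characteristic vectors of matchings (edge sets in which every vertex has degree at most one). A MILEF of a convex set $P\subseteq\mathbb{R}^d$ is a triple $(Q,\sigma,\pi)$ with $Q\subseteq\mathbb{R}^\ell$ a polyhedron, $\sigma:\mathbb{R}^\ell\to\mathbb{R}^k$, $\pi:\mathbb{R}^\ell\to\mathbb{R}^d$ affine, and $P=\operatorname{conv}(\pi(Q\cap\sigma^{-1}(\mathbb{Z}^k)))$; its size is the number of facets of $Q$ and $k$ is its number of integer variables. *)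

From HB Require Import structures.
From mathcomp Require Import all_boot all_order all_algebra.
From mathcomp Require Import reals.
Set Implicit Arguments. Unset Strict Implicit. Unset Printing Implicit Defensive.
Import Order.TTheory GRing.Theory Num.Theory.
Local Open Scope ring_scope.

(* A finite simple graph G = (V, E) with a fixed orientation: every edge e
   has a tail (the vertex it leaves) and a head (the vertex it enters). *)
Definition oriented_simple_graph (V E : finType) (tail head : E -> V) : Prop :=
  (forall e, tail e != head e) /\
  (forall e f, ((tail e == tail f) && (head e == head f)) ||
               ((tail e == head f) && (head e == tail f)) -> e = f).

Definition x_delta (R : realType) (V E : finType) (tail head : E -> V)
  (x : E -> R) (v : V) : R :=
  \sum_(e : E | (tail e == v) || (head e == v)) x e.

Definition x_delta_in (R : realType) (V E : finType) (tail head : E -> V)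
  (x : E -> R) (v : V) : R :=
  \sum_(e : E | head e == v) x e.

Definition is_int (R : realType) (r : R) : Prop := exists z : int, r = z%:~R.

Definition conv (R : realType) (E : finType) (S : (E -> R) -> Prop) : (E -> R) -> Prop :=
  fun x => exists (k : nat) (p : 'I_k -> E -> R) (lam : 'I_k -> R),
    (forall i, S (p i)) /\ (forall i, 0 <= lam i) /\ (\sum_(i < k) lam i = 1) /\
    (forall e, x e = \sum_(i < k) lam i * p i e).

Definition is_matching (V E : finType) (tail head : E -> V) (M : {set E}) : Prop :=
  forall v, (#|[set e in M | (tail e == v) || (head e == v)]| <= 1)%N.

Definition char_vec (R : realType) (E : finType) (M : {set E}) : E -> R :=
  fun e => (e \in M)%:R.

Definition matching_polytope (R : realType) (V E : finType) (tail head : E -> V)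
  : (E -> R) -> Prop :=
  conv (fun x => exists M : {set E}, is_matching tail head M /\ x = char_vec R M).

Definition relaxed_set (R : realType) (V E : finType) (tail head : E -> V)
  : (E -> R) -> Prop :=
  fun x => (forall e, 0 <= x e) /\
           (forall v, x_delta tail head x v <= 1) /\
           (forall v, is_int (x_delta_in tail head x v)).

(* MILEF (Q, sigma, pi) of a set P of R^E with Q = {y in R^l : A y <= b} given by
   m inequalities, sigma y = S y + s (k integer variables),
   pi y = T y + t, R^{#|E|} identified with R^E via enum_rank.
   Its size (number of facets of Q) is at most m. *)
Definition milef_with (R : realType) (E : finType) (P : (E -> R) -> Prop)
  (l m k : nat) (A : 'M[R]_(m, l)) (b : 'cV[R]_m)
  (S : 'M[R]_(k, l)) (s : 'cV[R]_k) (T : 'M[R]_(#|E|, l)) (t : 'cV[R]_#|E|) : Prop :=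
  P = conv (fun x => exists y : 'cV[R]_l,
            (forall i, (A *m y) i 0 <= b i 0) /\
            (forall j, is_int ((S *m y + s) j 0)) /\
            x = (fun e => (T *m y + t) (enum_rank e) 0)).

From HB Require Import structures.
From mathcomp Require Import all_boot all_order all_algebra.
From mathcomp Require Import reals boolp zify.
From mathcomp.algebra_tactics Require Import ring lra.
Set Implicit Arguments. Unset Strict Implicit. Unset Printing Implicit Defensive.
Import Order.TTheory GRing.Theory Num.Theory.
Local Open Scope ring_scope.

(* A point x of the relaxation has in-degrees x(delta^+(v)) in {0, 1}, since they
   are integers between 0 and x(delta(v)) <= 1.  An edge e with x_e > 0 enters a
   vertex of in-degree 1 and leaves one of in-degree 0 (its tail already carries
   x_e), so the support of x is bipartite and x is a fractional matching of a
   bipartite graph.  Such points are convex combinations of matchings: if x has a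
   fractional edge, the incidence matrix between fractional edges and the tight
   vertices they meet has a nonzero left kernel vector.  Indeed a tight vertex meets
   at least two fractional edges, so either there are fewer such vertices than
   fractional edges, or every fractional edge has both ends tight and the signs of
   the bipartition are a column dependency.  Moving x both ways along that direction
   until a fractional edge becomes integral or a slack vertex becomes tight writes x
   as a convex combination of two points with fewer fractional edges plus slack
   vertices.  The MILEF is the relaxation itself: |E| + |V| inequalities, with the
   |V| in-degrees as integer variables. *)

Section ConvexHull.
Variables (R : realType) (E : finType).
Implicit Types (S T : (E -> R) -> Prop) (x y : E -> R).

Definition conic_comb S (s : R) x :=
  exists (k : nat) (p : 'I_k -> E -> R) (lam : 'I_k -> R),
    (forall i, S (p i)) /\ (forall i, 0 <= lam i) /\ (\sum_(i < k) lam i = s) /\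
    (forall e, x e = \sum_(i < k) lam i * p i e).

Lemma conic_comb0 S : conic_comb S 0 (fun=> 0).
Proof.
exists 0%N, (fun _ _ => 0), (fun _ => 0).
by split; [case | split; [case | rewrite big_ord0; split => // e; rewrite big_ord0]].
Qed.

Lemma conic_combZ S s x c :
  0 <= c -> conic_comb S s x -> conic_comb S (c * s) (fun e => c * x e).
Proof.
move=> c_ge0 [k [p [lam [Sp [lam_ge0 [sum_lam xE]]]]]].
exists k, p, (fun i => c * lam i); split => //; split; first by move=> i; exact: mulr_ge0.
split; first by rewrite -mulr_sumr sum_lam.
by move=> e; rewrite xE mulr_sumr; apply: eq_bigr => i _; rewrite mulrA.
Qed.

Lemma conic_combD S s t x y :
  conic_comb S s x -> conic_comb S t y -> conic_comb S (s + t) (fun e => x e + y e).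
Proof.
move=> [k1 [p1 [l1 [Sp1 [l1_ge0 [sum1 xE]]]]]] [k2 [p2 [l2 [Sp2 [l2_ge0 [sum2 yE]]]]]].
pose p i := match split i with inl a => p1 a | inr b => p2 b end.
pose l i := match split i with inl a => l1 a | inr b => l2 b end.
have splitl (i : 'I_k1) : split (lshift k2 i) = inl i by exact: (unsplitK (inl i)).
have splitr (i : 'I_k2) : split (rshift k1 i) = inr i by exact: (unsplitK (inr i)).
exists (k1 + k2)%N, p, l; split; first by move=> i; rewrite /p; case: split.
split; first by move=> i; rewrite /l; case: split.
split.
  by rewrite big_split_ord -sum1 -sum2; congr (_ + _); apply: eq_bigr => i _;
     rewrite /l ?splitl ?splitr.
by move=> e; rewrite xE yE big_split_ord; congr (_ + _); apply: eq_bigr => i _;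
   rewrite /l /p ?splitl ?splitr.
Qed.

Lemma conic_comb_sum S k (q : 'I_k -> E -> R) (lam : 'I_k -> R) :
  (forall i, conv S (q i)) -> (forall i, 0 <= lam i) ->
  conic_comb S (\sum_(i < k) lam i) (fun e => \sum_(i < k) lam i * q i e).
Proof.
elim: k q lam => [|k IH] q lam Sq lam_ge0.
  have -> : (fun e => \sum_(i < 0) lam i * q i e) = fun=> 0.
    by apply/funext => e; rewrite big_ord0.
  by rewrite big_ord0; exact: conic_comb0.
have -> : (fun e => \sum_(i < k.+1) lam i * q i e) = fun e =>
  \sum_(i < k) lam (widen_ord (leqnSn k) i) * q (widen_ord (leqnSn k) i) e +
  lam ord_max * q ord_max e by apply/funext => e; rewrite big_ord_recr.
rewrite big_ord_recr; apply: conic_combD; first exact: IH.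
by rewrite -[X in conic_comb _ X]mulr1; exact: conic_combZ (Sq ord_max).
Qed.

Lemma conv_idem S x : conv (conv S) x -> conv S x.
Proof.
move=> [k [p [lam [Sp [lam_ge0 [sum_lam xE]]]]]].
rewrite /conv -/(conic_comb S 1 x) -sum_lam.
have -> : x = fun e => \sum_(i < k) lam i * p i e by exact/funext.
exact: conic_comb_sum.
Qed.

Lemma conv_sub S T x : (forall y, S y -> T y) -> conv S x -> conv T x.
Proof.
move=> ST [k [p [lam [Sp rest]]]]; exists k, p, lam; split => // i; exact: ST.
Qed.

Lemma conv_mem S x : S x -> conv S x.
Proof.
move=> Sx; exists 1%N, (fun _ => x), (fun _ => 1).
by split => //; split => //; rewrite big_ord1; split => // e; rewrite big_ord1 mul1r.
Qed.

Lemma conv_segment S x y (mu : R) : 0 <= mu <= 1 ->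
  conv S x -> conv S y -> conv S (fun e => mu * x e + (1 - mu) * y e).
Proof.
move=> /andP[mu_ge0 mu_le1] Sx Sy.
have mu'_ge0 : 0 <= 1 - mu by rewrite subr_ge0.
have := conic_combD (conic_combZ mu_ge0 Sx) (conic_combZ mu'_ge0 Sy).
by rewrite !mulr1 addrC subrK.
Qed.

End ConvexHull.

Lemma max_feasible_step (R : realFieldType) (I : finType) (a b : I -> R) :
  (forall i, 0 <= a i) -> (forall i, a i = 0 -> 0 <= b i) -> (exists i, b i < 0) ->
  exists2 eps, 0 < eps &
    (forall i, 0 <= a i + eps * b i) /\ exists2 i, 0 < a i & a i + eps * b i = 0.
Proof.
move=> a_ge0 b_ge0 [i0 bi0_lt0].
case: (arg_minP (fun i => a i / - b i) (bi0_lt0 : [pred i | b i < 0] i0)) => i.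
rewrite inE /= => bi_lt0 min_i.
have ai_gt0 : 0 < a i.
  rewrite lt_neqAle a_ge0 andbT; apply/eqP => ai0.
  by move: (b_ge0 i (esym ai0)); rewrite leNgt bi_lt0.
exists (a i / - b i); first by rewrite divr_gt0 // oppr_gt0.
split; last by exists i => //; field; lra.
move=> j; have [bj_lt0|bj_ge0] := ltP (b j) 0; last first.
  by rewrite addr_ge0 // mulr_ge0 // divr_ge0 // ?oppr_ge0 ltW.
have := min_i j bj_lt0; rewrite ler_pdivlMr ?oppr_gt0 // => min_ij.
lra.
Qed.

Section Degrees.
Variables (R : realType) (V E : finType) (tail head : E -> V).
Local Notation deg := (x_delta tail head).
Local Notation indeg := (x_delta_in tail head).
Implicit Types (x d : E -> R) (M F : {set E}).

Definition incident (e : E) (v : V) := (tail e == v) || (head e == v).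

Definition frac_matching x := (forall e, 0 <= x e) /\ (forall v, deg x v <= 1).

Definition matching_vec x := exists M, is_matching tail head M /\ x = char_vec R M.

Definition frac_edges x := [set e | 0 < x e < 1].

Lemma deg_perturb x d c v : deg (fun e => x e + c * d e) v = deg x v + c * deg d v.
Proof. by rewrite /x_delta big_split /= mulr_sumr. Qed.

Lemma degN d v : deg (fun e => - d e) v = - deg d v.
Proof. by rewrite /x_delta sumrN. Qed.

Lemma le_deg x e v : (forall e, 0 <= x e) -> incident e v -> x e <= deg x v.
Proof.
move=> x_ge0 ev; rewrite /x_delta (bigD1 e) //= lerDl.
by apply: sumr_ge0 => i _; exact: x_ge0.
Qed.

Lemma frac_matching_le1 x e : frac_matching x -> x e <= 1.
Proof.
move=> [x_ge0 deg_le1]; apply: le_trans (deg_le1 (tail e)).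
by apply: le_deg => //; rewrite /incident eqxx.
Qed.

Lemma deg_char_vec M v : deg (char_vec R M) v = #|[set e in M | incident e v]|%:R.
Proof.
rewrite /x_delta /char_vec -sum1_card natr_sum big_mkcond [RHS]big_mkcond /=.
by apply: eq_bigr => e _; rewrite inE andbC /incident; case: (_ || _); case: (e \in M).
Qed.

Lemma matching_vec_frac x : matching_vec x -> frac_matching x.
Proof.
move=> [M [matchM ->]]; split => [e|v]; first by rewrite /char_vec ler0n.
by rewrite deg_char_vec lern1; exact: matchM.
Qed.

Lemma frac_matching_integral x :
  frac_matching x -> frac_edges x = set0 -> matching_vec x.
Proof.
move=> fx no_frac.
have x01 e : x e = (x e == 1)%:R.
  have : e \notin frac_edges x by rewrite no_frac inE.
  rewrite inE negb_and -!leNgt => /orP[xe_le0 | xe_ge1].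
    have -> : x e = 0 by apply/eqP; rewrite eq_le xe_le0 fx.1.
    by rewrite eq_sym oner_eq0.
  have -> : x e = 1 by apply/eqP; rewrite eq_le xe_ge1 frac_matching_le1.
  by rewrite eqxx.
pose M := [set e | x e == 1].
have xM : x = char_vec R M by apply/funext => e; rewrite /char_vec inE -x01.
exists M; split => // v; rewrite -(ler_nat R) -deg_char_vec -xM; exact: fx.2.
Qed.

Lemma deg_indeg x v :
  deg x v = indeg x v + \sum_(e | incident e v && (head e != v)) x e.
Proof.
rewrite /x_delta (bigID (fun e => head e == v)) /=; congr (_ + _).
by apply: eq_bigl => e; rewrite /incident; case: (head e == v); rewrite ?orbT ?andbF.
Qed.

Lemma indeg_le_deg x v : (forall e, 0 <= x e) -> indeg x v <= deg x v.
Proof. by move=> x_ge0; rewrite deg_indeg lerDl sumr_ge0. Qed.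

Lemma le_indeg_head x e : (forall e, 0 <= x e) -> x e <= indeg x (head e).
Proof.
by move=> x_ge0; rewrite /x_delta_in (bigD1 e) //= lerDl sumr_ge0.
Qed.

Hypothesis tail_neq_head : forall e, tail e != head e.

Lemma indeg_tail_le x e :
  (forall e, 0 <= x e) -> indeg x (tail e) + x e <= deg x (tail e).
Proof.
move=> x_ge0; rewrite deg_indeg lerD2l (bigD1 e) /=; last first.
  by rewrite /incident eqxx eq_sym tail_neq_head.
by rewrite lerDl sumr_ge0.
Qed.

Lemma sum_card_incident F (T : {set V}) :
  (\sum_(v in T) #|[set e in F | incident e v]| =
   \sum_(e in F) ((tail e \in T) + (head e \in T)))%N.
Proof.
have sum_eq (a : V) : (\sum_(v in T) (a == v))%N = (a \in T).
  have [aT|aTN] := boolP (a \in T).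
    rewrite (bigD1 a) //= eqxx big1 // => v /andP[_].
    by rewrite eq_sym => /negbTE ->.
  by rewrite big1 // => v vT; apply/eqP; rewrite eqb0; apply: contraNneq aTN => ->.
under eq_bigr => v _ do rewrite -sum1_card big_mkcond /=.
rewrite exchange_big [RHS]big_mkcond /=; apply: eq_bigr => e _.
under eq_bigr => v _ do rewrite inE.
case: (e \in F) => /=; last by rewrite big1.
rewrite -!sum_eq -big_split /=; apply: eq_bigr => v _; rewrite /incident.
have [<-|] := eqVneq (tail e) v; first by rewrite eq_sym (negbTE (tail_neq_head e)).
by case: (head e == v).
Qed.

Lemma sum_incident (f : V -> R) (T : {set V}) e :
  tail e \in T -> head e \in T ->
  \sum_(v in T) f v * (incident e v)%:R = f (tail e) + f (head e).
Proof.
move=> tailT headT; rewrite (bigD1 (tail e)) //= (bigD1 (head e)) /=; last first.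
  by rewrite headT eq_sym tail_neq_head.
rewrite big1 => [|v /andP[/andP[_ v_ne_tail] v_ne_head]]; last first.
  by rewrite /incident eq_sym (negbTE v_ne_tail) eq_sym (negbTE v_ne_head) mulr0.
by rewrite /incident !eqxx orbT addr0 !mulr1.
Qed.

Lemma deg_push n (f : 'I_n -> E) (r : 'I_n -> R) v :
  deg (fun e => \sum_(i | f i == e) r i) v = \sum_(i | incident (f i) v) r i.
Proof.
rewrite (partition_big f (incident^~ v)) //; apply: eq_bigr => e ev.
by apply: eq_bigl => i; case: eqP => [->|_]; rewrite ?andbT ?andbF.
Qed.

End Degrees.

Lemma row_dependentP (K : fieldType) m n (B : 'M[K]_(m, n)) :
  reflect (exists2 r : 'rV_m, r != 0 & r *m B = 0) (\rank B < m)%N.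
Proof.
have -> : (\rank B < m)%N = ~~ row_free B by rewrite /row_free ltn_neqAle rank_leq_row andbT.
rewrite -kermx_eq0.
by apply: (iffP rowV0Pn) => [[r /sub_kermxP rB r0] | [r r0 /sub_kermxP rK]]; exists r.
Qed.

Section BipartiteFracMatching.
Variables (R : realType) (V E : finType) (tail head : E -> V).
Hypothesis tail_neq_head : forall e, tail e != head e.
Variable side : V -> bool.
Local Notation deg := (x_delta tail head).
Local Notation incident := (incident tail head).
Local Notation frac_matching := (frac_matching tail head).
Implicit Types (x d : E -> R).

Definition bipartite_support x :=
  forall e, x e != 0 -> ~~ side (tail e) && side (head e).

Definition tight_frac_vertices x :=
  [set v | (deg x v == 1) && [exists e in frac_edges x, incident e v]].

Lemma tight_frac_degree x v : frac_matching x -> v \in tight_frac_vertices x ->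
  (1 < #|[set e in frac_edges x | incident e v]|)%N.
Proof.
move=> [x_ge0 _]; rewrite inE => /andP[/eqP tight /exists_inP[e1 e1F e1v]].
have /andP[xe1_gt0 xe1_lt1] : 0 < x e1 < 1 by rewrite inE in e1F.
have others : \sum_(e | incident e v && (e != e1)) x e = 1 - x e1.
  by rewrite -tight /x_delta [in RHS](bigD1 e1) //= addrAC subrr add0r.
have [e2 /andP[/andP[e2v e2_ne_e1] xe2_gt0]] :
    exists e2, (incident e2 v && (e2 != e1)) && (0 < x e2).
  by apply: psumr_neq0P => [e _|]; rewrite ?x_ge0 // others; lra.
have xe2_lt1 : x e2 < 1.
  have : x e2 <= 1 - x e1 by rewrite -others (bigD1 e2) ?e2v //= lerDl sumr_ge0.
  lra.
rewrite (cardD1 e1) !inE xe1_gt0 xe1_lt1 e1v ltnS; apply/card_gt0P; exists e2.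
by rewrite !inE e2_ne_e1 e2v xe2_gt0 xe2_lt1.
Qed.

Definition frac_incidence x :
    'M[R]_(#|frac_edges x|, #|tight_frac_vertices x|) :=
  \matrix_(i, j) (incident (enum_val i) (enum_val j))%:R.

Lemma card_tight_frac_vertices x : frac_matching x ->
  (#|tight_frac_vertices x| <= #|frac_edges x|)%N /\
  ((#|frac_edges x| <= #|tight_frac_vertices x|)%N ->
   {in frac_edges x, forall e,
      (tail e \in tight_frac_vertices x) && (head e \in tight_frac_vertices x)}).
Proof.
move=> fx; set F := frac_edges x; set T := tight_frac_vertices x.
pose ends e := ((tail e \in T) + (head e \in T))%N.
have ends_ge : (2 * #|T| <= \sum_(e in F) ends e)%N.
  rewrite -sum_card_incident // mulnC -sum_nat_const.
  by apply: leq_sum => v; exact: tight_frac_degree.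
have sum_split : (\sum_(e in F) (2 - ends e) + \sum_(e in F) ends e = 2 * #|F|)%N.
  rewrite -big_split mulnC -sum_nat_const; apply: eq_bigr => e _.
  by apply: subnK; rewrite /ends; case: (_ \in T); case: (_ \in T).
split=> [|F_le_T e eF]; first lia.
have : (\sum_(e' in F) (2 - ends e') == 0)%N by apply/eqP; lia.
rewrite sum_nat_eq0 => /forall_inP/(_ e eF); rewrite subn_eq0 /ends.
by case: (tail e \in T); case: (head e \in T).
Qed.

Lemma rank_frac_incidence x :
  frac_matching x -> bipartite_support x -> frac_edges x != set0 ->
  (\rank (frac_incidence x) < #|frac_edges x|)%N.
Proof.
move=> fx bx F_neq0; have [T_le_F ends_tight] := card_tight_frac_vertices fx.
set F := frac_edges x in F_neq0 T_le_F ends_tight *.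
set T := tight_frac_vertices x in T_le_F ends_tight *.
have [T_lt_F|F_le_T] := ltnP #|T| #|F|; first exact: leq_ltn_trans (rank_leq_col _) _.
have {}ends_tight := ends_tight F_le_T.
suff : (\rank (frac_incidence x)^T < #|T|)%N by rewrite mxrank_tr => /leq_trans; apply.
apply/row_dependentP.
have T_gt0 : (0 < #|T|)%N by rewrite (leq_trans _ F_le_T) // card_gt0.
(* Every fractional edge has a [~~ side] tail and a [side] head, so the signs cancel. *)
pose sign v : R := if side v then 1 else -1.
exists (\row_j sign (enum_val j)).
  apply/eqP => /rowP /(_ (Ordinal T_gt0)); rewrite !mxE /sign.
  by case: side => /eqP; rewrite ?oppr_eq0 oner_eq0.
apply/rowP => i; rewrite !mxE; set e := enum_val i.
have eF : e \in F := enum_valP i.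
have /andP[tailT headT] := ends_tight e eF.
have /andP[/negbTE side_tail side_head] : ~~ side (tail e) && side (head e).
  by apply: bx; move: eF; rewrite inE => /andP[/gt_eqF ->].
under eq_bigr => j _ do rewrite !mxE.
rewrite -(big_enum_val (fun v => sign v * (incident e v)%:R)) sum_incident //.
by rewrite /sign side_tail side_head addNr.
Qed.

Lemma exists_balanced_direction x :
  frac_matching x -> bipartite_support x -> frac_edges x != set0 ->
  exists d, [/\ forall e, d e != 0 -> e \in frac_edges x,
                forall v, deg x v = 1 -> deg d v = 0 & exists e, d e != 0].
Proof.
move=> fx bx F_neq0.
have /row_dependentP[r r_neq0 rB0] := rank_frac_incidence fx bx F_neq0.
exists (fun e => \sum_(i | enum_val i == e) r 0 i); split.
- move=> e; apply: contraR => eNF; rewrite big_pred0 // => i.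
  by apply: contraNF eNF => /eqP <-; exact: enum_valP.
- move=> v tight; rewrite deg_push.
  have [vT|vNT] := boolP (v \in tight_frac_vertices x); last first.
    rewrite big_pred0 // => i; apply: contraNF vNT => ev.
    by rewrite inE tight eqxx; apply/exists_inP; exists (enum_val i) => //; exact: enum_valP.
  move/rowP: rB0 => /(_ (enum_rank_in vT v)); rewrite !mxE => rBv; rewrite -[RHS]rBv.
  rewrite big_mkcond /=; apply: eq_bigr => i _; rewrite !mxE (enum_rankK_in vT vT).
  by case: incident; rewrite ?mulr1 ?mulr0.
- have [i ri_neq0] : exists i, r 0 i != 0.
    apply/existsP; apply: contraR r_neq0 => /existsPn r0; apply/eqP/rowP => i.
    by rewrite mxE; exact/eqP/negPn/r0.
  exists (enum_val i); rewrite (big_pred1 i) // => j /=.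
  by apply/eqP/eqP => [/enum_val_inj | ->].
Qed.

Definition slack_vertices x := [set v | deg x v < 1].

Definition frac_measure x := (#|frac_edges x| + #|slack_vertices x|)%N.

Section Perturbation.
Variables (x d : E -> R).
Hypotheses (fx : frac_matching x) (bx : bipartite_support x).
Hypothesis d_supp : forall e, d e != 0 -> e \in frac_edges x.
Hypothesis d_bal : forall v, deg x v = 1 -> deg d v = 0.

Lemma frac_edges_perturb c : frac_edges (fun e => x e + c * d e) \subset frac_edges x.
Proof.
apply/subsetP => e; have [de0|/d_supp //] := eqVneq (d e) 0.
by rewrite !inE de0 mulr0 addr0.
Qed.

Lemma slack_vertices_perturb c :
  slack_vertices (fun e => x e + c * d e) \subset slack_vertices x.
Proof.
apply/subsetP => v; rewrite !inE deg_perturb.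
have [tight|not_tight] := eqVneq (deg x v) 1.
  by rewrite d_bal // mulr0 addr0 tight ltxx.
by move=> _; rewrite lt_neqAle not_tight fx.2.
Qed.

Lemma bipartite_support_perturb c : bipartite_support (fun e => x e + c * d e).
Proof.
move=> e; have [de0|/d_supp eF _] := eqVneq (d e) 0.
  by rewrite de0 mulr0 addr0; exact: bx.
by apply: bx; move: eF; rewrite inE => /andP[/gt_eqF ->].
Qed.

Lemma perturb_step : (exists e, d e != 0) ->
  exists2 eps, 0 < eps &
    [/\ frac_matching (fun e => x e + eps * d e),
        bipartite_support (fun e => x e + eps * d e) &
        (frac_measure (fun e => (x e + eps * d e)%R) < frac_measure x)%N].
Proof.
move=> [e1 de1_neq0].
have d0 e : x e = 0 -> d e = 0.
  by move=> xe0; have [//|/d_supp] := eqVneq (d e) 0; rewrite inE xe0 ltxx.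
(* Slacks of the constraints [0 <= x e] and [deg x v <= 1] and their rates along [d]. *)
pose a i := match i with inl e => x e | inr v => 1 - deg x v end.
pose b i := match i with inl e => d e | inr v => - deg d v end.
have a_ge0 i : 0 <= a i.
  by case: i => [e|v] /=; rewrite ?subr_ge0; [exact: fx.1 | exact: fx.2].
have b_ge0 i : a i = 0 -> 0 <= b i.
  by case: i => [e|v] /= ai0; [rewrite d0 | rewrite d_bal ?oppr0 //; lra].
have b_neg : exists i, b i < 0.
  have [e de_lt0|d_ge0] := pickP (fun e => d e < 0); first by exists (inl e).
  have {}d_ge0 e : 0 <= d e by rewrite leNgt d_ge0.
  exists (inr (head e1)); rewrite /= oppr_lt0.
  have e1_head : incident e1 (head e1) by rewrite /incident eqxx orbT.
  apply: lt_le_trans (le_deg d_ge0 e1_head).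
  by rewrite lt_neqAle eq_sym de1_neq0 d_ge0.
have [eps eps_gt0 [ab_ge0 [i ai_gt0 ai0]]] := max_feasible_step a_ge0 b_ge0 b_neg.
exists eps => //; split.
- split => [e|v]; first exact: (ab_ge0 (inl e)).
  by rewrite deg_perturb; have := ab_ge0 (inr v); rewrite /=; lra.
- exact: bipartite_support_perturb.
have sub_F := frac_edges_perturb eps; have sub_S := slack_vertices_perturb eps.
rewrite /frac_measure; case: i ai_gt0 ai0 => [e|v] /= ai_gt0 ai0.
  have /proper_card : frac_edges (fun e => x e + eps * d e) \proper frac_edges x.
    apply/properP; split => //; exists e; last by rewrite inE ai0 ltxx.
    by apply: d_supp; apply/eqP => de0; move: ai0; rewrite de0 mulr0 addr0; lra.
  by move=> ltF; rewrite -addSn leq_add // subset_leq_card.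
have /proper_card : slack_vertices (fun e => x e + eps * d e) \proper slack_vertices x.
  apply/properP; split => //; exists v; rewrite inE; first lra.
  by rewrite deg_perturb; lra.
by move=> ltS; rewrite -addnS leq_add // subset_leq_card.
Qed.

End Perturbation.

Lemma bipartite_frac_matching_conv x :
  frac_matching x -> bipartite_support x -> conv (matching_vec tail head) x.
Proof.
move: {2}(frac_measure x).+1 (ltnSn (frac_measure x)) => n.
elim: n x => // n IH x x_lt fx bx.
have [F0|F_neq0] := eqVneq (frac_edges x) set0.
  exact/conv_mem/frac_matching_integral.
have [d [d_supp d_bal [e de_neq0]]] := exists_balanced_direction fx bx F_neq0.
have [eps1 eps1_gt0 [f1 b1 m1]] := perturb_step fx bx d_supp d_bal (ex_intro _ e de_neq0).
have dN_supp e' : - d e' != 0 -> e' \in frac_edges x by rewrite oppr_eq0; exact: d_supp.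
have dN_bal v : deg x v = 1 -> deg (fun e' => - d e') v = 0.
  by move=> tight; rewrite degN d_bal // oppr0.
have dN_nz : exists e', - d e' != 0 by exists e; rewrite oppr_eq0.
have [eps2 eps2_gt0 [f2 b2 m2]] := perturb_step fx bx dN_supp dN_bal dN_nz.
have := conv_segment (mu := eps2 / (eps1 + eps2)) _
  (IH _ (leq_trans m1 (ltnSE x_lt)) f1 b1) (IH _ (leq_trans m2 (ltnSE x_lt)) f2 b2).
have -> : (fun e => eps2 / (eps1 + eps2) * (x e + eps1 * d e) +
                    (1 - eps2 / (eps1 + eps2)) * (x e + eps2 * - d e)) = x.
  by apply/funext => e'; field; lra.
apply; rewrite divr_ge0 ?ler_pdivrMr ?addr_gt0 ?ltW //=; lra.
Qed.

End BipartiteFracMatching.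

Section Relaxation.
Variables (R : realType) (V E : finType) (tail head : E -> V).
Hypothesis tail_neq_head : forall e, tail e != head e.
Local Notation indeg := (x_delta_in tail head).
Implicit Types x : E -> R.

Lemma relaxed_indeg01 x v : relaxed_set tail head x -> indeg x v = 0 \/ indeg x v = 1.
Proof.
move=> [x_ge0 [deg_le1 /(_ v)[z indeg_z]]].
have indeg_ge0 : 0 <= indeg x v by rewrite sumr_ge0.
have indeg_le1 : indeg x v <= 1 := le_trans (indeg_le_deg tail head v x_ge0) (deg_le1 v).
rewrite indeg_z ler0z in indeg_ge0; rewrite indeg_z lerz1 in indeg_le1.
rewrite indeg_z; have /orP[/eqP-> | /eqP->] : (z == 0) || (z == 1) by lia.
  by left.
by right.
Qed.

Lemma relaxed_bipartite x :
  relaxed_set tail head x -> bipartite_support tail head (fun v => indeg x v == 1) x.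
Proof.
move=> rx e xe_neq0; have [x_ge0 [deg_le1 _]] := rx.
have xe_gt0 : 0 < x e by rewrite lt_neqAle eq_sym xe_neq0 x_ge0.
apply/andP; split.
  apply/eqP => indeg_tail; have := indeg_tail_le tail_neq_head e x_ge0.
  by rewrite indeg_tail; have := deg_le1 (tail e); lra.
have := le_indeg_head tail head e x_ge0.
by case: (relaxed_indeg01 (head e) rx) => ->; [lra | rewrite eqxx].
Qed.

Lemma matching_vec_relaxed x : matching_vec tail head x -> relaxed_set tail head x.
Proof.
move=> mx; have [x_ge0 deg_le1] := matching_vec_frac mx.
split=> //; split=> // v; case: mx => M [_ ->].
exists (\sum_(e | head e == v) (e \in M))%N%:Z.
by rewrite /x_delta_in /char_vec -natr_sum.
Qed.

Lemma matching_polytope_relaxed :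
  @matching_polytope R V E tail head = conv (relaxed_set tail head).
Proof.
apply/funext => x; apply/propext; split; first exact/conv_sub/matching_vec_relaxed.
move=> rx; apply: (conv_idem (S := matching_vec tail head)).
apply: conv_sub rx => y ry; apply: bipartite_frac_matching_conv => //.
  by case: ry => y_ge0 [deg_le1 _].
exact: relaxed_bipartite.
Qed.

End Relaxation.

Section RelaxationMILEF.
Variables (R : realType) (V E : finType) (tail head : E -> V).
Implicit Types y : 'cV[R]_#|E|.

Definition vec_of y : E -> R := fun e => y (enum_rank e) 0.

Definition pred_mx (P : E -> V -> bool) : 'M[R]_(#|V|, #|E|) :=
  \matrix_(w, j) (P (enum_val j) (enum_val w))%:R.

Definition relaxed_ineq_mx : 'M[R]_(#|E| + #|V|, #|E|) :=
  col_mx (- 1%:M) (pred_mx (fun e v => incident tail head e v)).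

Definition relaxed_ineq_rhs : 'cV[R]_(#|E| + #|V|) := col_mx 0 (const_mx 1).

Definition indeg_mx : 'M[R]_(#|V|, #|E|) := pred_mx (fun e v => head e == v).

Lemma mul_pred_mx P y w :
  (pred_mx P *m y) w 0 = \sum_(e | P e (enum_val w)) vec_of y e.
Proof.
rewrite mxE [RHS]big_mkcond (reindex _ (onW_bij _ (enum_val_bij E))) /=.
apply: eq_bigr => j _; rewrite mxE /vec_of enum_valK.
by case: P; rewrite ?mul1r ?mul0r.
Qed.

Lemma relaxed_ineqP y :
  (forall i, (relaxed_ineq_mx *m y) i 0 <= relaxed_ineq_rhs i 0) <->
  (forall e, 0 <= vec_of y e) /\ (forall v, x_delta tail head (vec_of y) v <= 1).
Proof.
rewrite /relaxed_ineq_mx /relaxed_ineq_rhs mul_col_mx mulNmx mul1mx.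
split=> [ineq | [y_ge0 deg_le1] i].
  split=> [e | v].
    by have := ineq (lshift #|V| (enum_rank e)); rewrite !col_mxEu !mxE oppr_le0.
  by have := ineq (rshift #|E| (enum_rank v)); rewrite !col_mxEd mul_pred_mx !mxE enum_rankK.
case: (split_ordP i) => j ->; last by rewrite !col_mxEd mul_pred_mx mxE; exact: deg_le1.
by rewrite !col_mxEu !mxE oppr_le0; have := y_ge0 (enum_val j); rewrite /vec_of enum_valK.
Qed.

Lemma indeg_mx_intP y :
  (forall w, is_int ((indeg_mx *m y + 0) w 0)) <->
  (forall v, is_int (x_delta_in tail head (vec_of y) v)).
Proof.
split=> [int_y v | int_y w]; last by rewrite addr0 mul_pred_mx; exact: int_y.
by have := int_y (enum_rank v); rewrite addr0 mul_pred_mx enum_rankK.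
Qed.

Lemma relaxed_set_milef :
  milef_with (conv (relaxed_set tail head))
    relaxed_ineq_mx relaxed_ineq_rhs indeg_mx 0 1%:M 0.
Proof.
rewrite /milef_with; congr conv; apply/funext => x; apply/propext.
have vec_ofE y : (fun e => (1%:M *m y + 0) (enum_rank e) 0) = vec_of y.
  by apply/funext => e; rewrite addr0 mul1mx.
split=> [[x_ge0 [deg_le1 indeg_int]] | [y [/relaxed_ineqP ineq [/indeg_mx_intP int_y ->]]]].
  have xE : vec_of (\col_j x (enum_val j)) = x.
    by apply/funext => e; rewrite /vec_of mxE enum_rankK.
  by exists (\col_j x (enum_val j)); rewrite vec_ofE relaxed_ineqP indeg_mx_intP xE.
by rewrite vec_ofE; case: ineq.
Qed.

End RelaxationMILEF.

Lemma card_edges_le (V E : finType) (tail head : E -> V) :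
  oriented_simple_graph tail head -> (#|E| <= #|V| ^ 2)%N.
Proof.
move=> [_ simple]; rewrite expnS expn1 -card_prod.
apply: (@leq_card _ _ (fun e => (tail e, head e))) => e f [tail_ef head_ef].
by apply: simple; rewrite tail_ef head_ef !eqxx.
Qed.

Theorem mainTheorem17 :
  (forall (R : realType) (V E : finType) (tail head : E -> V),
     oriented_simple_graph tail head ->
     @matching_polytope R V E tail head = conv (relaxed_set tail head)) /\
  (exists C : nat, forall (R : realType) (V E : finType) (tail head : E -> V),
     oriented_simple_graph tail head ->
     exists (l m : nat) (A : 'M[R]_(m, l)) (b : 'cV[R]_m)
            (S : 'M[R]_(#|V|, l)) (s : 'cV[R]_#|V|)
            (T : 'M[R]_(#|E|, l)) (t : 'cV[R]_#|E|),
       (m <= C * (#|V|.+1) ^ 2)%N /\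
       milef_with (@matching_polytope R V E tail head) A b S s T t).
Proof.
split=> [R V E tail head [tail_neq_head _] | ]; first exact: matching_polytope_relaxed.
exists 1%N => R V E tail head G; have [tail_neq_head _] := G.
exists #|E|, (#|E| + #|V|)%N, (relaxed_ineq_mx R tail head), (relaxed_ineq_rhs R V E).
exists (indeg_mx R head), 0, 1%:M, 0; split.
  by have := card_edges_le G; rewrite mul1n !expnS expn0; nia.
by rewrite matching_polytope_relaxed //; exact: relaxed_set_milef.
Qed.
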